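(* Let $k$ be a commutative ring, let $R$ be a $k$-algebra and let $A$ be a bijective skew PBW extension over $R$ which is a $k$-algebra. Then the enveloping algebra $A^{e}=A\otimes_k A^{\mathrm{op}}$ is a bijective skew PBW extension over $R^{e}=R\otimes_k R^{\mathrm{op}}$.
   Context: Rings are associative with unity, not necessarily commutative. Given rings $R\subseteq A$, $A$ is a skew PBW extension over $R$, written $A=\sigma(R)\langle x_1,\dots,x_n\rangle$, if: (i) $R\subseteq A$; (ii) there are elements $x_1,\dots,x_n\in A$ such that $A$ is a free left $R$-module with basis $\mathrm{Mon}(A)=\{x_1^{\alpha_1}\cdots x_n^{\alpha_n}\mid (\alpha_1,\dots,\alpha_n)\in\mathbb{N}^n\}$; (iii) for each $1\le i\le n$ and each $r\in R\setminus\{0\}$ there is $c_{i,r}\in R\setminus\{0\}$ with $x_ir-c_{i,r}x_i\in R$; (iv) for all $1\le i,j\le n$ there is $c_{i,j}\in R\setminus\{0\}$ with $x_jx_i-c_{i,j}x_ix_j\in R+Rx_1+\cdots+Rx_n$. For such $A$, for each $i$ there exist an injective ring endomorphism $\sigma_i$ of $R$ and a $\sigma_i$-derivation $\delta_i$ of $R$ such that $x_ir=\sigma_i(r)x_i+\delta_i(r)$ for all $r\in R$. $A$ is called bijective if every $\sigma_i$ is bijective and the elements $c_{i,j}$ are invertible for $1\le i<j\le n$. For a $k$-algebra $B$, $B^{\mathrm{op}}$ is the opposite algebra (product $a*b=ba$) and $B^e=B\otimes_k B^{\mathrm{op}}$ is the enveloping algebra. *)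

From HB Require Import structures.
From mathcomp Require Import all_boot all_order all_algebra.
Set Implicit Arguments. Unset Strict Implicit. Unset Printing Implicit Defensive.
Import GRing.Theory.
Local Open Scope ring_scope.

Definition mon (A : ringType) (n : nat) (x : 'I_n -> A) (a : {ffun 'I_n -> nat}) : A :=
  \prod_(i < n) x i ^+ a i.

(* "R ⊆ A": R is identified with its image under an injective ring morphism. *)
Definition ring_embedding (R A : ringType) (iota : R -> A) : Prop :=
  [/\ injective iota, iota 1 = 1,
      (forall a b, iota (a + b) = iota a + iota b) &
      (forall a b, iota (a * b) = iota a * iota b)].

Definition skewPBW (R A : ringType) (iota : R -> A) (n : nat) (x : 'I_n -> A) : Prop :=
  [/\ ring_embedding iota,
      (forall a : A, exists (s : seq {ffun 'I_n -> nat}) (c : {ffun 'I_n -> nat} -> R),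
          a = \sum_(al <- s) iota (c al) * mon x al),
      (forall (s : seq {ffun 'I_n -> nat}) (c : {ffun 'I_n -> nat} -> R),
          uniq s -> \sum_(al <- s) iota (c al) * mon x al = 0 ->
          forall al, al \in s -> c al = 0),
      (forall (i : 'I_n) (r : R), r != 0 ->
          exists c : R, c != 0 /\ exists r' : R, x i * iota r - iota c * x i = iota r') &
      (forall i j : 'I_n, exists c : R, c != 0 /\
          exists (r0 : R) (r : 'I_n -> R),
            x j * x i - iota c * x i * x j = iota r0 + \sum_(l < n) iota (r l) * x l)].

Definition bijective_skewPBW (R A : ringType) (iota : R -> A) (n : nat) (x : 'I_n -> A) : Prop :=
  skewPBW iota x /\
  (forall i : 'I_n, exists (sigma delta : R -> R), bijective sigma /\
      forall r : R, x i * iota r = iota (sigma r) * x i + iota (delta r)) /\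
  (forall i j : 'I_n, (i < j)%N -> exists c : R,
      (exists d : R, c * d = 1 /\ d * c = 1) /\
      exists (r0 : R) (r : 'I_n -> R),
        x j * x i - iota c * x i * x j = iota r0 + \sum_(l < n) iota (r l) * x l).

Definition klinear (k : comRingType) (U V : lmodType k) (g : U -> V) : Prop :=
  forall (c : k) (u v : U), g (c *: u + v) = c *: g u + g v.

Definition kbilinear (k : comRingType) (M N : lmodType k) (P : lmodType k)
  (f : M -> N -> P) : Prop :=
  (forall (c : k) a a' b, f (c *: a + a') b = c *: f a b + f a' b) /\
  (forall (c : k) a b b', f a (c *: b + b') = c *: f a b + f a b').

Definition is_tensor (k : comRingType) (M N T : lmodType k) (t : M -> N -> T) : Prop :=
  kbilinear t /\
  forall (P : lmodType k) (f : M -> N -> P), kbilinear f ->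
    (exists g : T -> P, klinear g /\ forall a b, g (t a b) = f a b) /\
    (forall g1 g2 : T -> P, klinear g1 -> klinear g2 ->
       (forall a b, g1 (t a b) = f a b) -> (forall a b, g2 (t a b) = f a b) ->
       forall u, g1 u = g2 u).

(* (E, t) is the enveloping algebra B^e = B ⊗_k B^op of the k-algebra B:
   a tensor product whose multiplication is (a⊗b)(a'⊗b') = aa' ⊗ b'b. *)
Definition is_enveloping (k : comRingType) (B E : algType k) (t : B -> B -> E) : Prop :=
  is_tensor t /\ t 1 1 = 1 /\
  forall a b a' b', t a b * t a' b' = t (a * a') (b' * b).

From HB Require Import structures.
From mathcomp Require Import all_boot all_order all_algebra.
From Stdlib Require Import ClassicalEpsilon.
Set Implicit Arguments. Unset Strict Implicit. Unset Printing Implicit Defensive.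
Import GRing.Theory.
Local Open Scope ring_scope.

(* Because every sigma_i is bijective, the standard monomials of A are also a basis of A
   as a right R-module: left multiplication by x_j raises the degree filtration by one,
   and x^b r = sigma^b(r) x^b modulo lower degree, where sigma^b is a composite of the
   bijections sigma_i.  Taking left coordinates in the first tensor factor and right
   coordinates in the second then shows that A^e = A (x) A^op is free as a left
   R^e-module on the tensors x^a (x) x^b, i.e. on the ordered monomials in the 2n
   variables x_i (x) 1 and 1 (x) x_j.  Their commutation rules are tensor images of
   those of A; on the A^op side the constant 1 (x) c_{i,j} lands to the right of the
   variables and is moved across them by the ring automorphisms induced by the sigma's,
   which keeps it invertible. *)

Section KLinear.
Variables (k : comRingType) (U V W : lmodType k).

Lemma klinearD (g : U -> V) : klinear g -> forall u v, g (u + v) = g u + g v.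
Proof. by move=> hg u v; have := hg 1 u v; rewrite !scale1r. Qed.

Lemma klinear0 (g : U -> V) : klinear g -> g 0 = 0.
Proof. by move=> hg; apply: (addrI (g 0)); rewrite -klinearD // !addr0. Qed.

Lemma klinearZ (g : U -> V) : klinear g -> forall c u, g (c *: u) = c *: g u.
Proof. by move=> hg c u; rewrite -[c *: u]addr0 hg klinear0 // addr0. Qed.

Lemma klinearN (g : U -> V) : klinear g -> forall u, g (- u) = - g u.
Proof. by move=> hg u; rewrite -scaleN1r klinearZ // scaleN1r. Qed.

Lemma klinearB (g : U -> V) : klinear g -> forall u v, g (u - v) = g u - g v.
Proof. by move=> hg u v; rewrite klinearD // klinearN. Qed.

Lemma klinear_sum (g : U -> V) I (r : seq I) (P : pred I) F :
  klinear g -> g (\sum_(i <- r | P i) F i) = \sum_(i <- r | P i) g (F i).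
Proof. by move=> hg; apply: (big_morph g (klinearD hg) (klinear0 hg)). Qed.

Lemma klinear_id : klinear (@id U).
Proof. by []. Qed.

Lemma klinear_comp (g : V -> W) (f : U -> V) :
  klinear g -> klinear f -> klinear (fun u => g (f u)).
Proof. by move=> hg hf c u v; rewrite hf hg. Qed.

Lemma klinear_add (g f : U -> V) :
  klinear g -> klinear f -> klinear (fun u => g u + f u).
Proof. by move=> hg hf c u v; rewrite hf hg scalerDr addrACA. Qed.

Lemma klinear_opp (g : U -> V) : klinear g -> klinear (fun u => - g u).
Proof. by move=> hg c u v; rewrite hg opprD scalerN. Qed.

Lemma klinear_can (f g : U -> U) :
  cancel f g -> cancel g f -> klinear f -> klinear g.
Proof. by move=> fK gK hf c u v; apply: (can_inj fK); rewrite hf !gK. Qed.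

End KLinear.

Lemma klinear_mulr (k : comRingType) (B : algType k) (w : B) :
  klinear (fun u : B => u * w).
Proof. by move=> c u v; rewrite mulrDl -scalerAl. Qed.

Lemma klinear_mull (k : comRingType) (B : algType k) (w : B) :
  klinear (fun u : B => w * u).
Proof. by move=> c u v; rewrite mulrDr -scalerAr. Qed.

Section KBilinear.
Variables (k : comRingType) (M N P : lmodType k) (f : M -> N -> P).
Hypothesis hf : kbilinear f.

Lemma kbilinear_l b : klinear (f^~ b). Proof. by move=> c a a'; apply: hf.1. Qed.
Lemma kbilinear_r a : klinear (f a). Proof. by move=> c b b'; apply: hf.2. Qed.

Lemma kbil0l b : f 0 b = 0. Proof. exact: klinear0 (kbilinear_l b). Qed.
Lemma kbil0r a : f a 0 = 0. Proof. exact: klinear0 (kbilinear_r a). Qed.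
Lemma kbilDl a a' b : f (a + a') b = f a b + f a' b.
Proof. exact: klinearD (kbilinear_l b) a a'. Qed.
Lemma kbilDr a b b' : f a (b + b') = f a b + f a b'.
Proof. exact: klinearD (kbilinear_r a) b b'. Qed.
Lemma kbilZl c a b : f (c *: a) b = c *: f a b.
Proof. exact: klinearZ (kbilinear_l b) c a. Qed.
Lemma kbilZr c a b : f a (c *: b) = c *: f a b.
Proof. exact: klinearZ (kbilinear_r a) c b. Qed.
Lemma kbilBl a a' b : f (a - a') b = f a b - f a' b.
Proof. exact: klinearB (kbilinear_l b) a a'. Qed.
Lemma kbilBr a b b' : f a (b - b') = f a b - f a b'.
Proof. exact: klinearB (kbilinear_r a) b b'. Qed.
Lemma kbil_suml I (r : seq I) (Q : pred I) F b :
  f (\sum_(i <- r | Q i) F i) b = \sum_(i <- r | Q i) f (F i) b.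
Proof. exact: klinear_sum r Q F (kbilinear_l b). Qed.
Lemma kbil_sumr I (r : seq I) (Q : pred I) F a :
  f a (\sum_(i <- r | Q i) F i) = \sum_(i <- r | Q i) f a (F i).
Proof. exact: klinear_sum r Q F (kbilinear_r a). Qed.

Lemma kbilinear_linear_comp (P' : lmodType k) (g : P -> P') :
  klinear g -> kbilinear (fun a b => g (f a b)).
Proof.
by move=> hg; split=> c a a' b; rewrite ?kbilDl ?kbilZl ?kbilDr ?kbilZr klinearD ?klinearZ.
Qed.

Lemma kbilinear_comp (M' N' : lmodType k) (g : M' -> M) (h : N' -> N) :
  klinear g -> klinear h -> kbilinear (fun a b => f (g a) (h b)).
Proof.
by move=> hg hh; split=> c a a' b; rewrite ?hg ?hh ?kbilDl ?kbilZl ?kbilDr ?kbilZr.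
Qed.

End KBilinear.

Section TensorSpan.
Variables (k : comRingType) (M N T : lmodType k) (t : M -> N -> T).

Definition tensor_span (u : T) : Prop :=
  exists s : seq (k * M * N), u = \sum_(p <- s) p.1.1 *: t p.1.2 p.2.

Definition tensor_spanb : {pred T} :=
  fun u => if excluded_middle_informative (tensor_span u) then true else false.

Lemma tensor_spanbP u : reflect (tensor_span u) (u \in tensor_spanb).
Proof.
by rewrite unfold_in /tensor_spanb; case: excluded_middle_informative; constructor.
Qed.

Lemma tensor_spanb_submod_closed : submod_closed tensor_spanb.
Proof.
split; first by apply/tensor_spanbP; exists [::]; rewrite big_nil.
move=> c u v /tensor_spanbP [s ->] /tensor_spanbP [s' ->]; apply/tensor_spanbP.
exists ([seq (c * p.1.1, p.1.2, p.2) | p <- s] ++ s').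
rewrite big_cat big_map scaler_sumr; congr (_ + _).
by apply: eq_bigr => p _; rewrite scalerA.
Qed.

HB.instance Definition _ :=
  GRing.isSubmodClosed.Build k T tensor_spanb tensor_spanb_submod_closed.

Record tensor_span_type := TensorSpan {
  tensor_span_val :> T; _ : tensor_span_val \in tensor_spanb }.
HB.instance Definition _ := [isSub for tensor_span_val].
HB.instance Definition _ := [Choice of tensor_span_type by <:].
HB.instance Definition _ := [SubChoice_isSubLmodule of tensor_span_type by <:].

End TensorSpan.

Section TensorProduct.
Variables (k : comRingType) (M N T : lmodType k) (t : M -> N -> T).
Hypothesis ht : is_tensor t.

Lemma tensor_bilinear : kbilinear t. Proof. by case: ht. Qed.

Definition tensor_lift (P : lmodType k) (f : M -> N -> P) : T -> P :=
  epsilon (inhabits (fun _ => 0))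
    (fun g => klinear g /\ forall a b, g (t a b) = f a b).

Section Lift.
Variables (P : lmodType k) (f : M -> N -> P).
Hypothesis hf : kbilinear f.

Let tensor_liftP : klinear (tensor_lift f) /\ forall a b, tensor_lift f (t a b) = f a b.
Proof. exact: epsilon_spec (ht.2 P f hf).1. Qed.

Lemma tensor_lift_linear : klinear (tensor_lift f).
Proof. by case: tensor_liftP. Qed.

Lemma tensor_lift_tensor a b : tensor_lift f (t a b) = f a b.
Proof. by case: tensor_liftP. Qed.

End Lift.

Lemma tensor_ext (P : lmodType k) (g1 g2 : T -> P) : klinear g1 -> klinear g2 ->
  (forall a b, g1 (t a b) = g2 (t a b)) -> g1 =1 g2.
Proof.
move=> h1 h2 E; have hf := kbilinear_linear_comp tensor_bilinear h1.
by apply: ((ht.2 P _ hf).2 g1 g2 h1 h2) => // a b; rewrite E.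
Qed.

Section Map.
Variables (M' N' T' : lmodType k) (t' : M' -> N' -> T') (f : M -> M') (g : N -> N').
Hypotheses (ht' : kbilinear t') (f_linear : klinear f) (g_linear : klinear g).

Definition tensor_map : T -> T' := tensor_lift (fun a b => t' (f a) (g b)).

Lemma tensor_map_linear : klinear tensor_map.
Proof. exact/tensor_lift_linear/kbilinear_comp. Qed.

Lemma tensor_map_tensor a b : tensor_map (t a b) = t' (f a) (g b).
Proof. exact/tensor_lift_tensor/kbilinear_comp. Qed.

End Map.

Lemma tensor_map_can (f f' : M -> M) (g g' : N -> N) :
  klinear f -> klinear f' -> klinear g -> klinear g' -> cancel f f' -> cancel g g' ->
  cancel (tensor_map t f g) (tensor_map t f' g').
Proof.
move=> lf lf' lg lg' fK gK; have ht1 := tensor_bilinear.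
apply: tensor_ext => [||a b]; last by rewrite !tensor_map_tensor ?fK ?gK.
  exact: klinear_comp (tensor_map_linear ht1 lf' lg') (tensor_map_linear ht1 lf lg).
exact: klinear_id.
Qed.

Lemma tensor_spanned u : tensor_span t u.
Proof.
have t_in a b : t a b \in tensor_spanb t.
  by apply/tensor_spanbP; exists [:: (1, a, b)]; rewrite big_seq1 scale1r.
pose t' a b : tensor_span_type t := TensorSpan (t_in a b).
have ht' : kbilinear t'.
  by split=> c a a' b; apply: val_inj; [exact: tensor_bilinear.1 | exact: tensor_bilinear.2].
have hval : klinear (@tensor_span_val _ _ _ _ t) by [].
have -> : u = tensor_span_val (tensor_lift t' u).
  apply: esym (tensor_ext (klinear_comp hval (tensor_lift_linear ht')) (@klinear_id _ _) _ u).
  by move=> a b; rewrite /= tensor_lift_tensor.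
by case: (tensor_lift t' u) => v /= /tensor_spanbP.
Qed.

End TensorProduct.

Section EnvelopingAlgebra.
Variables (k : comRingType) (B E : algType k) (t : B -> B -> E).
Hypothesis ht : is_enveloping t.

Lemma enveloping_tensor : is_tensor t. Proof. by case: ht. Qed.
Lemma enveloping_bilinear : kbilinear t. Proof. by case: ht => [[]]. Qed.
Lemma enveloping11 : t 1 1 = 1. Proof. by case: ht => _ []. Qed.
Lemma envelopingM a b a' b' : t a b * t a' b' = t (a * a') (b' * b).
Proof. by case: ht => _ [] _ ->. Qed.

Lemma enveloping_prodl (I : Type) (r : seq I) (F : I -> B) :
  \prod_(i <- r) t (F i) 1 = t (\prod_(i <- r) F i) 1.
Proof.
apply/esym/(big_morph (t^~ 1)); last exact: enveloping11.
by move=> a b; rewrite envelopingM mulr1.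
Qed.

Lemma enveloping_prodr_rev m (F : 'I_m -> B) :
  \prod_(j < m) t 1 (F j) = t 1 (\prod_(j < m) F (rev_ord j)).
Proof.
elim: m F => [|m IH] F; first by rewrite !big_ord0 enveloping11.
rewrite big_ord_recr /= (IH (fun j => F (widen_ord (leqnSn m) j))) big_ord_recl.
rewrite envelopingM mul1r; congr (t _ (_ * _)).
  by congr F; apply: val_inj; rewrite /= subn1.
by apply: eq_bigr => j _; congr F; apply: val_inj; rewrite /= subSS.
Qed.

Lemma enveloping_exprl a m : t a 1 ^+ m = t (a ^+ m) 1.
Proof.
elim: m => [|m IH]; first by rewrite !expr0 enveloping11.
by rewrite !exprS IH envelopingM mulr1.
Qed.

Lemma enveloping_exprr a m : t 1 a ^+ m = t 1 (a ^+ m).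
Proof.
elim: m => [|m IH]; first by rewrite !expr0 enveloping11.
by rewrite exprS IH envelopingM mulr1 -exprSr.
Qed.

End EnvelopingAlgebra.

Section EnvelopingMap.
Variables (k : comRingType) (B C EB EC : algType k) (f : B -> C).
Variables (tB : B -> B -> EB) (tC : C -> C -> EC).
Hypotheses (htB : is_enveloping tB) (htC : is_enveloping tC).
Hypotheses (f_linear : klinear f) (f1 : f 1 = 1) (fM : {morph f : a b / a * b}).

Local Notation fe := (tensor_map tB tC f f).

Let fe_tensor a b : fe (tB a b) = tC (f a) (f b).
Proof.
by rewrite tensor_map_tensor //; [exact: enveloping_tensor htB | exact: enveloping_bilinear htC].
Qed.

Let fe_linear : klinear fe.
Proof.
by apply: tensor_map_linear => //; [exact: enveloping_tensor htB | exact: enveloping_bilinear htC].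
Qed.

Lemma enveloping_map1 : fe 1 = 1.
Proof. by rewrite -(enveloping11 htB) fe_tensor f1 enveloping11. Qed.

Lemma enveloping_mapM u v : fe (u * v) = fe u * fe v.
Proof.
have hB := enveloping_tensor htB.
have fe_pureM a b w : fe (tB a b * w) = fe (tB a b) * fe w.
  move: w; apply: (tensor_ext hB (g1 := fun w => fe (tB a b * w))) => [||a' b'].
  - exact: klinear_comp fe_linear (klinear_mull _).
  - exact: klinear_comp (klinear_mull _) fe_linear.
  by rewrite envelopingM // !fe_tensor !fM envelopingM.
move: u; apply: (tensor_ext hB (g1 := fun u => fe (u * v))) => [||a b].
- exact: klinear_comp fe_linear (klinear_mulr _).
- exact: klinear_comp (klinear_mulr _) fe_linear.
exact: fe_pureM.
Qed.

End EnvelopingMap.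

Lemma big_seq_pred1 (V : nmodType) (I : eqType) (r : seq I) (a : I) (F : I -> V) :
  uniq r -> a \in r -> \sum_(b <- r | b == a) F b = F a.
Proof.
move=> ur ar; rewrite (big_rem a) //= eqxx big1_seq ?addr0 // => b /andP[/eqP ->].
by rewrite mem_rem_uniqF.
Qed.

Lemma big_group_seq (V : nmodType) (I J : eqType) (s : seq I) (r : seq J)
    (h : I -> J) (F : I -> V) :
  uniq r -> (forall b, b \in s -> h b \in r) ->
  \sum_(b <- s) F b = \sum_(a <- r) \sum_(b <- s | h b == a) F b.
Proof.
move=> ur sr; rewrite (exchange_big_dep predT) //=; apply: eq_big_seq => b bs.
rewrite (eq_bigl (fun a => a == h b)) => [|a]; last by rewrite eq_sym.
by rewrite (big_seq_pred1 (fun=> F b) ur (sr _ bs)).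
Qed.

Section Exponents.
Variable n : nat.
Local Open Scope nat_scope.
Local Notation exps := {ffun 'I_n -> nat}.

Definition mdeg (a : exps) : nat := \sum_(l < n) a l.

Definition exps_lt (d : nat) : seq exps :=
  [seq a <- undup [seq [ffun l => val (f l)] | f : {ffun 'I_n -> 'I_d}] | mdeg a < d].

Lemma exps_lt_uniq d : uniq (exps_lt d).
Proof. exact/filter_uniq/undup_uniq. Qed.

Lemma exp_le_mdeg (a : exps) l : a l <= mdeg a.
Proof. by rewrite /mdeg (bigD1 l) //= leq_addr. Qed.

Lemma mem_exps_lt d a : (a \in exps_lt d) = (mdeg a < d).
Proof.
rewrite mem_filter mem_undup andb_idr //; case: d => [|d] ha //.
apply/imageP; exists [ffun l => inord (a l)] => //.
apply/ffunP => l; rewrite !ffunE /= inordK //.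
exact: leq_ltn_trans (exp_le_mdeg a l) ha.
Qed.

Lemma big_exps_lt_mdeg (V : nmodType) d e (F : exps -> V) : d <= e ->
  (\sum_(a <- exps_lt e | (mdeg a < d)%N) F a = \sum_(a <- exps_lt d) F a)%R.
Proof.
move=> de; rewrite -big_filter; apply/perm_big/uniq_perm.
- exact/filter_uniq/exps_lt_uniq.
- exact: exps_lt_uniq.
move=> a; rewrite mem_filter !mem_exps_lt andb_idr // => ad.
exact: leq_trans ad de.
Qed.

Definition exp0 : exps := [ffun => 0].
Definition incr_exp (a : exps) (i : 'I_n) : exps := [ffun l => a l + (l == i)].
Definition decr_exp (a : exps) (i : 'I_n) : exps := [ffun l => a l - (l == i)].
Definition unit_exp (i : 'I_n) : exps := incr_exp exp0 i.

Lemma mdeg_exp0 : mdeg exp0 = 0.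
Proof. by rewrite /mdeg big1 // => l _; rewrite ffunE. Qed.

Lemma mdeg_eq0 (a : exps) : mdeg a = 0 -> a = exp0.
Proof.
move/eqP; rewrite /mdeg sum_nat_eq0 => /forallP a0; apply/ffunP => l.
by rewrite ffunE; apply/eqP/(implyP (a0 l)).
Qed.

Lemma mdeg_incr_exp (a : exps) i : mdeg (incr_exp a i) = (mdeg a).+1.
Proof.
rewrite /mdeg; under eq_bigr do rewrite ffunE; rewrite big_split /= -addn1; congr (_ + _).
by rewrite (bigD1 i) //= eqxx big1 // => l /negbTE ->.
Qed.

Lemma unit_exp_neq0 i : unit_exp i != exp0.
Proof. by apply/eqP => /(congr1 mdeg); rewrite mdeg_incr_exp mdeg_exp0. Qed.

Lemma decr_expK (a : exps) i : 0 < a i -> incr_exp (decr_exp a i) i = a.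
Proof.
move=> ai; apply/ffunP => l; rewrite !ffunE.
by case: eqP => [->|_]; rewrite ?subnK // subn0 addn0.
Qed.

Lemma mdeg_decr_exp (a : exps) i : 0 < a i -> (mdeg (decr_exp a i)).+1 = mdeg a.
Proof. by move=> ai; rewrite -(mdeg_incr_exp _ i) decr_expK. Qed.

Lemma decr_exp_lt (a : exps) (j l : 'I_n) :
  (forall l : 'I_n, l < j -> a l = 0) -> l < j -> decr_exp a j l = 0.
Proof. by move=> a0 lj; rewrite ffunE a0 //; case: eqP => // lj'; rewrite lj' ltnn in lj. Qed.

Lemma first_pos_exp (a : exps) : mdeg a != 0 ->
  exists2 j : 'I_n, 0 < a j & forall l : 'I_n, l < j -> a l = 0.
Proof.
move=> a0; have [l0 al0] : exists l, 0 < a l.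
  apply/existsP; apply: contraR a0 => /existsPn a0; apply/eqP/big1 => l _.
  by apply/eqP; rewrite -leqn0 leqNgt a0.
have [j aj jmin] := @arg_minnP _ l0 (fun l => 0 < a l) val al0.
exists j => // l lj; apply/eqP; rewrite -leqn0 leqNgt; apply: contraTN lj => /jmin.
by rewrite -leqNgt.
Qed.

End Exponents.

Section Monomials.
Variables (A : ringType) (n : nat) (x : 'I_n -> A).
Local Notation exps := {ffun 'I_n -> nat}.

Lemma prod_ord_from (G : 'I_n -> A) (i : 'I_n) :
  (forall l : 'I_n, (l < i)%N -> G l = 1) ->
  \prod_(l < n) G l = G i * \prod_(i.+1 <= m < n) G (insubd i m).
Proof.
move=> G1; have insubdK (l : 'I_n) : insubd i l = l by apply/val_inj; rewrite val_insubd ltn_ord.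
rewrite (_ : \prod_(l < n) G l = \prod_(0 <= m < n) G (insubd i m)); last first.
  by rewrite big_mkord; apply: eq_bigr => l _; rewrite insubdK.
rewrite (@big_cat_nat _ _ _ i 0 n) ?(ltnW (ltn_ord i)) //= big1_seq ?mul1r.
  by rewrite (big_ltn (ltn_ord i)) insubdK.
move=> m; rewrite mem_index_iota => /andP[_ mi]; apply: G1.
by rewrite val_insubd (ltn_trans mi (ltn_ord i)).
Qed.

Lemma mulx_mon (a : exps) (i : 'I_n) : (forall l : 'I_n, (l < i)%N -> a l = 0%N) ->
  x i * mon x a = mon x (incr_exp a i).
Proof.
move=> a0; have lti (l : 'I_n) : (l < i)%N -> (l == i) = false.
  by move=> li; apply/negbTE; rewrite neq_ltn li.
rewrite /mon (prod_ord_from (G := fun l => x l ^+ a l) (i := i)) => [|l li]; last by rewrite a0.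
rewrite (prod_ord_from (G := fun l => x l ^+ incr_exp a i l) (i := i)) => [|l li]; last first.
  by rewrite ffunE a0 // lti.
rewrite ffunE eqxx addn1 exprS mulrA; congr (_ * _); apply: eq_big_nat => m /andP[im mn].
rewrite ffunE; suff -> : (insubd i m == i) = false by rewrite addn0.
by apply/negbTE; rewrite neq_ltn val_insubd mn im orbT.
Qed.

Lemma mon_exp0 : mon x (exp0 n) = 1.
Proof. by rewrite /mon big1 // => l _; rewrite ffunE expr0. Qed.

Lemma mon_unit_exp (i : 'I_n) : mon x (unit_exp i) = x i.
Proof. by rewrite -mulx_mon ?mon_exp0 ?mulr1 // => l _; rewrite ffunE. Qed.

End Monomials.

Section MonomialCoordinates.
Variables (k : comRingType) (R A : lmodType k) (n : nat).
Local Notation exps := {ffun 'I_n -> nat}.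
Variable B : exps -> R -> A.
Hypothesis B_linear : forall a, klinear (B a).

Definition msum d (f : exps -> R) : A := \sum_(a <- exps_lt n d) B a (f a).

Definition trunc_lt d (f : exps -> R) (a : exps) : R :=
  if a \in exps_lt n d then f a else 0.

Lemma msum_widen d e f : (d <= e)%N -> msum d f = msum e (trunc_lt d f).
Proof.
move=> de; rewrite /msum -(big_exps_lt_mdeg _ de) big_mkcond /=.
apply: eq_bigr => a _; rewrite /trunc_lt mem_exps_lt.
by case: ifP => // _; rewrite klinear0.
Qed.

Lemma msumD d f g : msum d f + msum d g = msum d (fun a => f a + g a).
Proof. by rewrite /msum -big_split; apply: eq_bigr => a _; rewrite klinearD. Qed.

Lemma msumZ d c f : c *: msum d f = msum d (fun a => c *: f a).
Proof. by rewrite /msum scaler_sumr; apply: eq_bigr => a _; rewrite klinearZ. Qed.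

Lemma msumN d f : - msum d f = msum d (fun a => - f a).
Proof. by rewrite /msum -sumrN; apply: eq_bigr => a _; rewrite klinearN. Qed.

Lemma msumB d f g : msum d f - msum d g = msum d (fun a => f a - g a).
Proof. by rewrite msumN msumD. Qed.

Lemma msum0 d : msum d (fun _ => 0) = 0.
Proof. by rewrite /msum big1 // => a _; rewrite klinear0. Qed.

Lemma msum_single b r : B b r = msum (mdeg b).+1 (fun a => if a == b then r else 0).
Proof.
rewrite /msum (eq_bigr (fun a => if a == b then B a r else 0)) => [|a _].
  by rewrite -big_mkcond big_seq_pred1 ?exps_lt_uniq ?mem_exps_lt.
by case: ifP; rewrite ?klinear0.
Qed.

Definition mspan d (u : A) : Prop := exists f, u = msum d f.

Lemma mspan0 d : mspan d 0.
Proof. by exists (fun _ => 0); rewrite msum0. Qed.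

Lemma mspanD d u v : mspan d u -> mspan d v -> mspan d (u + v).
Proof. by move=> [f ->] [g ->]; exists (fun a => f a + g a); rewrite msumD. Qed.

Lemma mspanN d u : mspan d u -> mspan d (- u).
Proof. by move=> [f ->]; exists (fun a => - f a); rewrite msumN. Qed.

Lemma mspan_widen d e u : (d <= e)%N -> mspan d u -> mspan e u.
Proof. by move=> de [f ->]; exists (trunc_lt d f); rewrite (msum_widen _ de). Qed.

Lemma mspan_sum d (I : eqType) (r : seq I) (F : I -> A) :
  (forall i, i \in r -> mspan d (F i)) -> mspan d (\sum_(i <- r) F i).
Proof.
move=> hF; rewrite big_seq.
by apply: (big_ind (mspan d)); [exact: mspan0 | exact: mspanD | exact: hF].
Qed.

Lemma mspan_term d a r : (mdeg a < d)%N -> mspan d (B a r).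
Proof.
move=> ad; apply: (mspan_widen ad).
by exists (fun b => if b == a then r else 0); apply: msum_single.
Qed.

Section Coordinates.
Hypothesis msum_free : forall d f, msum d f = 0 -> forall a, a \in exps_lt n d -> f a = 0.
Hypothesis mspan_all : forall u, exists d, mspan d u.

Lemma msum_inj d f g : msum d f = msum d g -> forall a, a \in exps_lt n d -> f a = g a.
Proof.
move=> fg a ad; apply/eqP; rewrite -subr_eq0; apply/eqP.
by apply: (msum_free (d := d) (f := fun a => f a - g a)) => //; rewrite -msumB fg subrr.
Qed.

Definition mcoord (u : A) (a : exps) : R :=
  let p := epsilon (inhabits (0%N, fun _ => 0)) (fun p => u = msum p.1 p.2) in
  trunc_lt p.1 p.2 a.

Lemma mcoord_msum d f a : mcoord (msum d f) a = trunc_lt d f a.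
Proof.
rewrite /mcoord; set p := epsilon _ _.
have fp : msum d f = msum p.1 p.2.
  by apply: (epsilon_spec _ (fun p => msum d f = msum p.1 p.2)); exists (d, f).
have E : msum (maxn d p.1) (trunc_lt d f) = msum (maxn d p.1) (trunc_lt p.1 p.2).
  by rewrite -!msum_widen ?leq_maxl ?leq_maxr.
case ha : (a \in exps_lt n (maxn d p.1)); first by rewrite (msum_inj E ha).
move: ha; rewrite /trunc_lt !mem_exps_lt leq_max.
by case/norP => /negbTE -> /negbTE ->.
Qed.

Lemma mcoord_linear a : klinear (mcoord^~ a).
Proof.
move=> c u v; have [d [f ->]] := mspan_all u; have [e [g ->]] := mspan_all v.
rewrite (msum_widen f (leq_maxl d e)) (msum_widen g (leq_maxr d e)) msumZ msumD.
by rewrite !mcoord_msum /trunc_lt; case: ifP; rewrite ?scaler0 ?addr0.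
Qed.

Lemma mcoord_term b r a : mcoord (B b r) a = if b == a then r else 0.
Proof.
rewrite msum_single mcoord_msum /trunc_lt mem_exps_lt eq_sym.
by case: eqP => [->|]; rewrite ?ltnSn //; case: ifP.
Qed.

Lemma mcoord_mspan d u a : mspan d u -> (d <= mdeg a)%N -> mcoord u a = 0.
Proof. by move=> [f ->] da; rewrite mcoord_msum /trunc_lt mem_exps_lt ltnNge da. Qed.

End Coordinates.
End MonomialCoordinates.

Section SkewDerivation.
Variables (k : comRingType) (R A : algType k) (iota : R -> A) (y : A).
Hypotheses (iota_linear : klinear iota) (iota1 : iota 1 = 1).
Hypothesis iotaM : {morph iota : a b / a * b}.
Hypothesis y_affine_inj : forall a b a' b',
  iota a * y + iota b = iota a' * y + iota b' -> a = a' /\ b = b'.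

Lemma skew_derivation_props (sigma delta : R -> R) :
    (forall r, y * iota r = iota (sigma r) * y + iota (delta r)) ->
  [/\ klinear sigma, klinear delta, {morph sigma : r s / r * s} & sigma 1 = 1].
Proof.
move=> y_r; have iotaD := klinearD iota_linear.
have lin c u v : sigma (c *: u + v) = c *: sigma u + sigma v /\
                 delta (c *: u + v) = c *: delta u + delta v.
  apply: y_affine_inj; rewrite -y_r !iota_linear mulrDr mulrDl -scalerAr !y_r.
  by rewrite scalerDr scalerAl addrACA.
split=> [c u v|c u v|r s|]; [exact: (lin c u v).1 | exact: (lin c u v).2 | |].
  have [] // := @y_affine_inj (sigma (r * s)) (delta (r * s)) (sigma r * sigma s)
    (sigma r * delta s + delta r * s).
  by rewrite -y_r iotaM mulrA y_r mulrDl -mulrA y_r mulrDr !mulrA iotaD !iotaM addrA.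
have [] // := @y_affine_inj (sigma 1) (delta 1) 1 0.
by rewrite -y_r iota1 (klinear0 iota_linear) mul1r mulr1 addr0.
Qed.

End SkewDerivation.

Section SkewPBW.
Variables (k : comRingType) (R A : algType k) (iota : R -> A) (n : nat) (x : 'I_n -> A).
Local Notation exps := {ffun 'I_n -> nat}.
Hypothesis iota_emb : ring_embedding iota.
Hypothesis iota_k : forall (c : k) (r : R), iota (c *: r) = c *: iota r.
Hypothesis mon_gen : forall a : A, exists (s : seq exps) (c : exps -> R),
  a = \sum_(al <- s) iota (c al) * mon x al.
Hypothesis mon_free : forall (s : seq exps) (c : exps -> R),
  uniq s -> \sum_(al <- s) iota (c al) * mon x al = 0 -> forall al, al \in s -> c al = 0.
Hypothesis x_iota : forall i : 'I_n, exists (sigma delta : R -> R), bijective sigma /\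
  forall r : R, x i * iota r = iota (sigma r) * x i + iota (delta r).
Hypothesis x_x : forall i j : 'I_n, exists c : R, c != 0 /\
  exists (r0 : R) (r : 'I_n -> R),
    x j * x i - iota c * x i * x j = iota r0 + \sum_(l < n) iota (r l) * x l.

Lemma iota1 : iota 1 = 1. Proof. by case: iota_emb. Qed.
Lemma iotaD a b : iota (a + b) = iota a + iota b. Proof. by case: iota_emb. Qed.
Lemma iotaM a b : iota (a * b) = iota a * iota b. Proof. by case: iota_emb. Qed.
Lemma iota_linear : klinear iota. Proof. by move=> c u v; rewrite iotaD iota_k. Qed.
Lemma iota_sum I (r : seq I) (P : pred I) F :
  iota (\sum_(i <- r | P i) F i) = \sum_(i <- r | P i) iota (F i).
Proof. exact: klinear_sum r P F iota_linear. Qed.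

Definition lterm (a : exps) (r : R) : A := iota r * mon x a.
Definition rterm (a : exps) (r : R) : A := mon x a * iota r.

Lemma lterm_linear a : klinear (lterm a).
Proof. by move=> c u v; rewrite /lterm iota_linear mulrDl scalerAl. Qed.

Lemma rterm_linear a : klinear (rterm a).
Proof. by move=> c u v; rewrite /rterm iota_linear mulrDr scalerAr. Qed.

Local Notation lfil := (mspan lterm).
Local Notation rfil := (mspan rterm).
Local Notation lfilD := (mspanD lterm_linear).
Local Notation lfil_sum := (mspan_sum lterm_linear).
Local Notation lfil_widen := (mspan_widen lterm_linear).
Local Notation lfil_term := (mspan_term lterm_linear).

Lemma lmsum_free d f : msum lterm d f = 0 -> forall a, a \in exps_lt n d -> f a = 0.
Proof. by move=> f0 a ad; apply: (mon_free (exps_lt_uniq n d) f0). Qed.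

Lemma lfil_all u : exists d, lfil d u.
Proof.
have [s [c ->]] := mon_gen u; pose d := (\max_(al <- s) mdeg al).+1.
exists d, (fun a => \sum_(b <- s | b == a) c b).
rewrite (big_group_seq _ (h := id) (exps_lt_uniq n d)) => [|b bs]; last first.
  by rewrite mem_exps_lt ltnS; apply: leq_bigmax_seq.
apply: eq_bigr => a _; rewrite /lterm iota_sum mulr_suml.
by apply: eq_bigr => b /eqP ->.
Qed.

Definition lcoord := mcoord lterm.

Lemma lcoord_linear a : klinear (lcoord^~ a).
Proof. exact: mcoord_linear lterm_linear lmsum_free lfil_all a. Qed.

Lemma lcoordD u v a : lcoord (u + v) a = lcoord u a + lcoord v a.
Proof. exact: klinearD (lcoord_linear a) u v. Qed.

Lemma lcoord_term b r a : lcoord (lterm b r) a = if b == a then r else 0.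
Proof. exact: mcoord_term lterm_linear lmsum_free b r a. Qed.

Lemma lcoord_lfil d u a : lfil d u -> (d <= mdeg a)%N -> lcoord u a = 0.
Proof. exact: (mcoord_mspan lterm_linear lmsum_free). Qed.

Lemma lfil_mon d a : (mdeg a < d)%N -> lfil d (mon x a).
Proof. by move=> ad; have := lfil_term 1 ad; rewrite /lterm iota1 mul1r. Qed.

Lemma lfil_mull d r u : lfil d u -> lfil d (iota r * u).
Proof.
move=> [f ->]; exists (fun a => r * f a); rewrite /msum mulr_sumr.
by apply: eq_bigr => a _; rewrite /lterm mulrA iotaM.
Qed.

Lemma x_affine_inj i a b a' b' :
  iota a * x i + iota b = iota a' * x i + iota b' -> a = a' /\ b = b'.
Proof.
have E a0 b0 : iota a0 * x i + iota b0 = lterm (unit_exp i) a0 + lterm (exp0 n) b0.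
  by rewrite /lterm mon_unit_exp mon_exp0 mulr1.
have ne := unit_exp_neq0 i; rewrite !E => ab.
have := congr1 (lcoord^~ (unit_exp i)) ab; have := congr1 (lcoord^~ (exp0 n)) ab.
rewrite /= !lcoordD !lcoord_term !eqxx (negbTE ne) eq_sym (negbTE ne) !add0r !addr0.
by move=> -> ->.
Qed.

Lemma mulx_lfil_from_mon j d u : (forall a, (mdeg a < d)%N -> lfil d.+1 (x j * mon x a)) ->
  lfil d u -> lfil d.+1 (x j * u).
Proof.
move=> xmon [f ->]; have [sigma [delta [_ x_r]]] := x_iota j.
rewrite /msum mulr_sumr; apply: lfil_sum => a; rewrite mem_exps_lt => ad.
rewrite /lterm mulrA x_r mulrDl -mulrA; apply: lfilD.
  exact/lfil_mull/xmon.
exact/lfil_term/ltnW.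
Qed.

Lemma mulx_mon_lfil_step e :
    (forall e', (e' < e)%N -> forall i a, mdeg a = e' -> lfil e'.+2 (x i * mon x a)) ->
  forall i a, mdeg a = e -> lfil e.+2 (x i * mon x a).
Proof.
move=> IHe i; have [m im] := ubnP i; elim: m i im => // m IHm i im a ae.
have [/mdeg_eq0 ->|a_nz] := eqVneq (mdeg a) 0%N.
  rewrite mulx_mon => [|l _]; last by rewrite ffunE.
  by apply: lfil_mon; rewrite mdeg_incr_exp mdeg_exp0.
have [j aj j_first] := first_pos_exp a_nz.
have [ij|ji] := leqP i j.
  rewrite mulx_mon => [|l li]; last exact/j_first/(leq_trans li ij).
  by apply: lfil_mon; rewrite mdeg_incr_exp ae.
set a' := decr_exp a j; have a'e : (mdeg a').+1 = e by rewrite mdeg_decr_exp.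
have -> : mon x a = x j * mon x a'.
  by rewrite mulx_mon ?decr_expK // => l lj; apply: decr_exp_lt.
have xa' l : lfil e.+1 (x l * mon x a') by rewrite -a'e; apply: IHe; rewrite -?a'e.
have [c [_ [r0 [r xij]]]] := x_x j i.
rewrite mulrA -(subrK (iota c * x j * x i) (x i * x j)) xij !mulrDl mulr_suml.
apply: lfilD; [apply: lfilD|].
- by apply: lfil_term; rewrite -a'e ltnS ltnW.
- apply: lfil_sum => l _; rewrite -mulrA; apply: lfil_mull.
  exact: lfil_widen (leqnSn _) (xa' l).
rewrite -!mulrA; apply/lfil_mull/(mulx_lfil_from_mon _ (xa' i)) => b.
rewrite ltnS leq_eqVlt => /predU1P [be|be].
  by apply: (IHm j) => //; apply: leq_trans ji im.
by apply: lfil_widen (IHe _ be j b erefl); rewrite !ltnS ltnW.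
Qed.

Lemma mulx_mon_lfil i a : lfil (mdeg a).+2 (x i * mon x a).
Proof.
suff: forall e i a, mdeg a = e -> lfil e.+2 (x i * mon x a) by move/(_ _ i a erefl).
by elim/ltn_ind => e IHe; apply: mulx_mon_lfil_step.
Qed.

Lemma mulx_lfil j d u : lfil d u -> lfil d.+1 (x j * u).
Proof.
apply: mulx_lfil_from_mon => a ad; apply: lfil_widen (mulx_mon_lfil j a).
by rewrite ltnS.
Qed.

Local Notation rfilD := (mspanD rterm_linear).
Local Notation rfilN := (mspanN rterm_linear).
Local Notation rfil_sum := (mspan_sum rterm_linear).
Local Notation rfil_widen := (mspan_widen rterm_linear).
Local Notation rfil_term := (mspan_term rterm_linear).

Lemma mon_iota_commute b : exists s : R -> R, [/\ bijective s, s 0 = 0 &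
  forall r, lfil (mdeg b) (mon x b * iota r - iota (s r) * mon x b)].
Proof.
move Eb: (mdeg b) => e; elim: e b Eb => [|e IH] b be.
  exists id; split=> // [|r]; first by exists id.
  by rewrite (mdeg_eq0 be) mon_exp0 mul1r mulr1 subrr; apply: (mspan0 lterm_linear).
have [j bj j_first] : exists2 j : 'I_n, (0 < b j)%N & forall l : 'I_n, (l < j)%N -> b l = 0%N.
  by apply: first_pos_exp; rewrite be.
set b' := decr_exp b j; have b'e : mdeg b' = e by apply: succn_inj; rewrite mdeg_decr_exp.
have [s [s_bij s0 s_comm]] := IH b' b'e.
have [sigma [delta [sigma_bij x_r]]] := x_iota j.
have [sigma_lin _ _ _] := skew_derivation_props iota_linear iota1 iotaM (@x_affine_inj j) x_r.
exists (sigma \o s); split=> [|/=|r]; first exact: bij_comp.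
  by rewrite s0 klinear0.
have -> : mon x b = x j * mon x b'.
  by rewrite mulx_mon ?decr_expK // => l; apply: decr_exp_lt.
rewrite -mulrA -(subrK (iota (s r) * mon x b') (mon x b' * iota r)) mulrDr.
rewrite [x j * (iota _ * _)]mulrA x_r.
rewrite mulrDl -!mulrA [_ + iota (delta _) * _]addrC addrA addrK /=.
by apply: lfilD; [exact/mulx_lfil/s_comm | apply: lfil_term; rewrite b'e].
Qed.

Lemma lfil_rfil d u : lfil d u -> rfil d u.
Proof.
elim: d u => [|d IH] u [f ->].
  by exists (fun _ => 0); rewrite /msum !big1_seq // => a; rewrite mem_exps_lt.
apply: rfil_sum => a; rewrite mem_exps_lt ltnS => ad.
have [s [[s' sK s'K] _ s_comm]] := mon_iota_commute a.
have -> : lterm a (f a) = rterm a (s' (f a)) -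
    (mon x a * iota (s' (f a)) - iota (s (s' (f a))) * mon x a).
  by rewrite /lterm /rterm s'K subKr.
apply: rfilD; first by apply: rfil_term; rewrite ltnS.
exact/rfilN/(rfil_widen (leqnSn d))/IH/(lfil_widen ad)/s_comm.
Qed.

Lemma rfil_all u : exists d, rfil d u.
Proof. by have [d /lfil_rfil] := lfil_all u; exists d. Qed.

Definition sigma_mon (b : exps) : R -> R := epsilon (inhabits id) (fun s =>
  [/\ bijective s, s 0 = 0 &
      forall r, lfil (mdeg b) (mon x b * iota r - iota (s r) * mon x b)]).

Lemma sigma_monP b : [/\ bijective (sigma_mon b), sigma_mon b 0 = 0 &
  forall r, lfil (mdeg b) (mon x b * iota r - iota (sigma_mon b r) * mon x b)].
Proof. exact: epsilon_spec _ _ (mon_iota_commute b). Qed.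

Lemma lcoord_rterm b' r b : (mdeg b' <= mdeg b)%N ->
  lcoord (rterm b' r) b = if b' == b then sigma_mon b' r else 0.
Proof.
move=> b'b; have [_ _ s_comm] := sigma_monP b'.
rewrite -(subrK (lterm b' (sigma_mon b' r)) (rterm b' r)) lcoordD lcoord_term.
by rewrite (lcoord_lfil (s_comm r)) ?add0r.
Qed.

Lemma rmsum_free_top d f : msum rterm d.+1 f = 0 -> forall b, mdeg b = d -> f b = 0.
Proof.
move=> f0 b bd; have [s_bij s0 _] := sigma_monP b.
apply: (bij_inj s_bij); rewrite s0.
have := congr1 (lcoord^~ b) f0; rewrite /= (klinear0 (lcoord_linear b)) /msum.
rewrite (klinear_sum _ _ _ (lcoord_linear b)).
rewrite (eq_big_seq (fun b' => if b' == b then sigma_mon b' (f b') else 0)) => [|b'].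
  by rewrite -big_mkcond big_seq_pred1 ?exps_lt_uniq ?mem_exps_lt ?bd.
by rewrite mem_exps_lt ltnS -bd => /lcoord_rterm ->.
Qed.

Lemma rmsum_free d f : msum rterm d f = 0 -> forall b, b \in exps_lt n d -> f b = 0.
Proof.
elim: d f => [|d IH] f f0 b; first by rewrite mem_exps_lt.
have ftop := rmsum_free_top f0.
rewrite mem_exps_lt ltnS leq_eqVlt => /predU1P [/ftop //|bd].
suff fd : msum rterm d f = 0 by apply: IH fd _ _; rewrite mem_exps_lt.
rewrite (msum_widen rterm_linear _ (leqnSn d)) -f0; apply: eq_big_seq => b'.
rewrite /trunc_lt !mem_exps_lt ltnS leq_eqVlt => /predU1P [b'd|-> //].
by rewrite b'd ltnn ftop // klinear0 ?rterm_linear.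
Qed.

Definition rcoord := mcoord rterm.

Lemma rcoord_linear a : klinear (rcoord^~ a).
Proof. exact: mcoord_linear rterm_linear rmsum_free rfil_all a. Qed.

Lemma rcoord_term b r a : rcoord (rterm b r) a = if b == a then r else 0.
Proof. exact: mcoord_term rterm_linear rmsum_free b r a. Qed.

Section Enveloping.
Variables (Re Ae : algType k) (tR : R -> R -> Re) (tA : A -> A -> Ae).
Hypotheses (hRe : is_enveloping tR) (hAe : is_enveloping tA).
Local Notation exps2 := {ffun 'I_(n + n) -> nat}.

Local Notation htR := (enveloping_tensor hRe).
Local Notation htA := (enveloping_tensor hAe).
Local Notation btR := (enveloping_bilinear hRe).
Local Notation btA := (enveloping_bilinear hAe).

Definition iota_e : Re -> Ae := tensor_map tR tA iota iota.

Lemma iota_e_tensor a b : iota_e (tR a b) = tA (iota a) (iota b).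
Proof. exact: (tensor_map_tensor htR btA iota_linear iota_linear a b). Qed.

Lemma iota_e_linear : klinear iota_e.
Proof. exact: (tensor_map_linear htR btA iota_linear iota_linear). Qed.

Lemma iota_e1 : iota_e 1 = 1.
Proof. exact: enveloping_map1 hRe hAe iota_linear iota1. Qed.

Lemma iota_eM u v : iota_e (u * v) = iota_e u * iota_e v.
Proof. exact: enveloping_mapM hRe hAe iota_linear iotaM u v. Qed.

Lemma iota_eD u v : iota_e (u + v) = iota_e u + iota_e v.
Proof. exact: klinearD iota_e_linear u v. Qed.

Lemma iota_eN u : iota_e (- u) = - iota_e u.
Proof. exact: klinearN iota_e_linear u. Qed.

Lemma iota_e0 : iota_e 0 = 0.
Proof. exact: klinear0 iota_e_linear. Qed.

(* The right-hand variables are numbered backwards: A^op reverses products, so this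
   makes ordered monomials in [xe] tensors of ordered monomials in [x] (see [mon_xe]). *)
Definition xe (l : 'I_(n + n)) : Ae :=
  match split l with inl i => tA (x i) 1 | inr j => tA 1 (x (rev_ord j)) end.

Definition exp_l (g : exps2) : exps := [ffun i => g (lshift n i)].
Definition exp_r (g : exps2) : exps := [ffun j => g (rshift n (rev_ord j))].
Definition exp_pair (a b : exps) : exps2 :=
  [ffun l => match split l with inl i => a i | inr j => b (rev_ord j) end].

Lemma xe_lshift i : xe (lshift n i) = tA (x i) 1.
Proof. by rewrite /xe (unsplitK (inl i)). Qed.

Lemma xe_rshift j : xe (rshift n j) = tA 1 (x (rev_ord j)).
Proof. by rewrite /xe (unsplitK (inr j)). Qed.

Lemma exp_l_pair a b : exp_l (exp_pair a b) = a.
Proof. by apply/ffunP => i; rewrite !ffunE (unsplitK (inl i)). Qed.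

Lemma exp_r_pair a b : exp_r (exp_pair a b) = b.
Proof. by apply/ffunP => j; rewrite !ffunE (unsplitK (inr _)) rev_ordK. Qed.

Lemma eq_exp_lr g g' : (exp_l g == exp_l g') && (exp_r g == exp_r g') = (g == g').
Proof.
apply/andP/eqP => [[/eqP/ffunP gl /eqP/ffunP gr]|-> //]; apply/ffunP => l.
rewrite -(splitK l); case: (split l) => [i|j] /=; first by have := gl i; rewrite !ffunE.
by have := gr (rev_ord j); rewrite !ffunE rev_ordK.
Qed.

Lemma mon_xe g : mon xe g = tA (mon x (exp_l g)) (mon x (exp_r g)).
Proof.
rewrite /mon big_split_ord /=.
under eq_bigr do rewrite xe_lshift (enveloping_exprl hAe).
under [in X in _ * X]eq_bigr do rewrite xe_rshift (enveloping_exprr hAe).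
rewrite (enveloping_prodl hAe) (enveloping_prodr_rev hAe) (envelopingM hAe) !mulr1.
by congr tA; apply: eq_bigr => i _; rewrite ?rev_ordK ffunE.
Qed.

Local Notation tmap f g := (tensor_map tR tR f g).

Lemma tmap_tensor (f g : R -> R) a b : klinear f -> klinear g ->
  tmap f g (tR a b) = tR (f a) (g b).
Proof. by move=> lf lg; exact: (tensor_map_tensor htR btR lf lg a b). Qed.

Lemma tmap_linear (f g : R -> R) : klinear f -> klinear g -> klinear (tmap f g).
Proof. exact: (tensor_map_linear htR btR). Qed.

Lemma tmap_bij (f g : R -> R) : klinear f -> klinear g -> bijective f -> bijective g ->
  bijective (tmap f g).
Proof.
move=> lf lg [f' fK f'K] [g' gK g'K].
have lf' := klinear_can fK f'K lf; have lg' := klinear_can gK g'K lg.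
exists (tmap f' g'); first exact: (tensor_map_can htR lf lf' lg lg' fK gK).
exact: (tensor_map_can htR lf' lf lg' lg f'K g'K).
Qed.

Lemma xe_lshift_iota_e i (sigma delta : R -> R) :
    (forall r, x i * iota r = iota (sigma r) * x i + iota (delta r)) ->
    klinear sigma -> klinear delta ->
  forall v, xe (lshift n i) * iota_e v =
            iota_e (tmap sigma id v) * xe (lshift n i) + iota_e (tmap delta id v).
Proof.
move=> x_r ls ld; have lid := @klinear_id _ R.
apply: (tensor_ext htR) => [||a b].
- exact: klinear_comp (klinear_mull _) iota_e_linear.
- apply: klinear_add; last exact: klinear_comp iota_e_linear (tmap_linear ld lid).
  exact: klinear_comp (klinear_mulr _) (klinear_comp iota_e_linear (tmap_linear ls lid)).
rewrite xe_lshift !tmap_tensor // !iota_e_tensor !(envelopingM hAe) x_r mulr1 mul1r.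
exact: (kbilDl btA).
Qed.

Lemma xe_rshift_iota_e j (sigma delta sigma' : R -> R) :
    (forall r, x (rev_ord j) * iota r = iota (sigma r) * x (rev_ord j) + iota (delta r)) ->
    cancel sigma sigma' -> cancel sigma' sigma -> klinear sigma -> klinear delta ->
  forall v, xe (rshift n j) * iota_e v =
    iota_e (tmap id sigma' v) * xe (rshift n j) - iota_e (tmap id (delta \o sigma') v).
Proof.
move=> x_r sK s'K ls ld; have lid := @klinear_id _ R.
have ls' := klinear_can sK s'K ls; have lds' := klinear_comp ld ls'.
apply: (tensor_ext htR) => [||a b].
- exact: klinear_comp (klinear_mull _) iota_e_linear.
- apply: klinear_add; last exact/klinear_opp/(klinear_comp iota_e_linear (tmap_linear lid lds')).
  exact: klinear_comp (klinear_mulr _) (klinear_comp iota_e_linear (tmap_linear lid ls')).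
rewrite xe_rshift !tmap_tensor // !iota_e_tensor !(envelopingM hAe) mulr1 mul1r /=.
have -> : iota b * x (rev_ord j) = x (rev_ord j) * iota (sigma' b) - iota (delta (sigma' b)).
  by rewrite x_r s'K addrK.
exact: (kbilBr btA).
Qed.

Lemma xe_iota_e l : exists sigma delta : Re -> Re, [/\ bijective sigma, klinear sigma &
  forall v, xe l * iota_e v = iota_e (sigma v) * xe l + iota_e (delta v)].
Proof.
have lid := @klinear_id _ R; have bid : bijective (@id R) by exists id.
rewrite -(splitK l); case: (split l) => [i|j] /=.
  have [sigma [delta [s_bij x_r]]] := x_iota i.
  have [ls ld _ _] := skew_derivation_props iota_linear iota1 iotaM (@x_affine_inj _) x_r.
  exists (tmap sigma id), (tmap delta id); split; [exact: tmap_bij | exact: tmap_linear |].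
  exact: xe_lshift_iota_e.
have [sigma [delta [[sigma' sK s'K] x_r]]] := x_iota (rev_ord j).
have [ls ld _ _] := skew_derivation_props iota_linear iota1 iotaM (@x_affine_inj _) x_r.
have ls' := klinear_can sK s'K ls.
exists (tmap id sigma'), (fun v => - tmap id (delta \o sigma') v); split.
- by apply: tmap_bij => //; exists sigma.
- exact: tmap_linear.
by move=> v; rewrite (xe_rshift_iota_e x_r sK s'K) // iota_eN.
Qed.

Definition xe_affine (w : Ae) : Prop := exists (r0 : Re) (r : 'I_(n + n) -> Re),
  w = iota_e r0 + \sum_(l < n + n) iota_e (r l) * xe l.

Lemma xe_affine_const r : xe_affine (iota_e r).
Proof. by exists r, (fun=> 0); rewrite big1 ?addr0 // => l _; rewrite iota_e0 mul0r. Qed.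

Lemma xe_affine0 : xe_affine 0.
Proof. by rewrite -iota_e0; apply: xe_affine_const. Qed.

Lemma xe_affine_term r l : xe_affine (iota_e r * xe l).
Proof.
exists 0, (fun l' => if l' == l then r else 0); rewrite iota_e0 add0r.
rewrite (bigD1 l) //= eqxx big1 ?addr0 // => l' /negbTE ->.
by rewrite iota_e0 mul0r.
Qed.

Lemma xe_affineD u v : xe_affine u -> xe_affine v -> xe_affine (u + v).
Proof.
move=> [r0 [r ->]] [r0' [r' ->]]; exists (r0 + r0'), (fun l => r l + r' l).
rewrite iota_eD addrACA -big_split; congr (_ + _).
by apply: eq_bigr => l _; rewrite iota_eD mulrDl.
Qed.

Lemma xe_affineN u : xe_affine u -> xe_affine (- u).
Proof.
move=> [r0 [r ->]]; exists (- r0), (fun l => - r l); rewrite iota_eN opprD -sumrN.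
by congr (_ + _); apply: eq_bigr => l _; rewrite iota_eN mulNr.
Qed.

Lemma xe_affine_sum (I : Type) (s : seq I) (F : I -> Ae) :
  (forall i, xe_affine (F i)) -> xe_affine (\sum_(i <- s) F i).
Proof. by move=> hF; apply: big_ind => //; [exact: xe_affine0 | exact: xe_affineD]. Qed.

Lemma xe_affine_mull w u : xe_affine u -> xe_affine (iota_e w * u).
Proof.
move=> [r0 [r ->]]; exists (w * r0), (fun l => w * r l).
rewrite mulrDr iota_eM mulr_sumr; congr (_ + _).
by apply: eq_bigr => l _; rewrite iota_eM mulrA.
Qed.

Lemma xe_affine_xe_iota_e l w : xe_affine (xe l * iota_e w).
Proof.
have [sigma [delta [_ _ ->]]] := xe_iota_e l.
by apply: xe_affineD; [exact: xe_affine_term | exact: xe_affine_const].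
Qed.

Definition x_affine (u : A) : Prop := exists (r0 : R) (r : 'I_n -> R),
  u = iota r0 + \sum_(l < n) iota (r l) * x l.

Lemma xe_affine_tensorl u : x_affine u -> xe_affine (tA u 1).
Proof.
move=> [r0 [r ->]]; rewrite (kbilDl btA) (kbil_suml btA); apply: xe_affineD.
  by rewrite -iota1 -iota_e_tensor; apply: xe_affine_const.
apply: xe_affine_sum => l.
have -> : tA (iota (r l) * x l) 1 = iota_e (tR (r l) 1) * xe (lshift n l).
  by rewrite iota_e_tensor xe_lshift (envelopingM hAe) iota1 mulr1.
exact: xe_affine_term.
Qed.

Lemma xe_affine_tensorr u : x_affine u -> xe_affine (tA 1 u).
Proof.
move=> [r0 [r ->]]; rewrite (kbilDr btA) (kbil_sumr btA); apply: xe_affineD.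
  by rewrite -iota1 -iota_e_tensor; apply: xe_affine_const.
apply: xe_affine_sum => l.
have -> : tA 1 (iota (r l) * x l) = xe (rshift n (rev_ord l)) * iota_e (tR 1 (r l)).
  by rewrite iota_e_tensor xe_rshift rev_ordK (envelopingM hAe) iota1 mulr1.
exact: xe_affine_xe_iota_e.
Qed.

Definition xe_span (w : Ae) : Prop :=
  exists s : seq (Re * exps2), w = \sum_(p <- s) iota_e p.1 * mon xe p.2.

Lemma xe_span_sum (I : Type) (s : seq I) (F : I -> Ae) :
  (forall i, xe_span (F i)) -> xe_span (\sum_(i <- s) F i).
Proof.
move=> hF; apply: big_ind => //; first by exists [::]; rewrite big_nil.
by move=> _ _ [s1 ->] [s2 ->]; exists (s1 ++ s2); rewrite big_cat.
Qed.

Lemma xe_span_tensor a b : xe_span (tA a b).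
Proof.
have [d [f ->]] := lfil_all a; have [e [g ->]] := rfil_all b.
rewrite /msum (kbil_suml btA); apply: xe_span_sum => al.
rewrite (kbil_sumr btA); apply: xe_span_sum => be.
exists [:: (tR (f al) (g be), exp_pair al be)].
by rewrite big_seq1 mon_xe exp_l_pair exp_r_pair iota_e_tensor (envelopingM hAe).
Qed.

Lemma mon_xe_gen w : exists (s : seq exps2) (c : exps2 -> Re),
  w = \sum_(g <- s) iota_e (c g) * mon xe g.
Proof.
have [s' ->] : xe_span w.
  have [s ->] := tensor_spanned htA w.
  by apply: xe_span_sum => p; rewrite -(kbilZl btA); apply: xe_span_tensor.
exists (undup (map snd s')), (fun g => \sum_(p <- s' | p.2 == g) p.1).
rewrite (big_group_seq _ (h := snd) (undup_uniq (map snd s'))) => [|p ps]; last first.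
  by rewrite mem_undup; apply: map_f.
apply: eq_bigr => g _; rewrite (klinear_sum _ _ _ iota_e_linear) mulr_suml.
by apply: eq_bigr => p /eqP ->.
Qed.

Definition ecoord (g : exps2) : Ae -> Re :=
  tensor_lift tA (fun u v => tR (lcoord u (exp_l g)) (rcoord v (exp_r g))).

Lemma ecoord_bilinear g :
  kbilinear (fun u v => tR (lcoord u (exp_l g)) (rcoord v (exp_r g))).
Proof. exact: (kbilinear_comp btR (lcoord_linear _) (rcoord_linear _)). Qed.

Lemma ecoord_linear g : klinear (ecoord g).
Proof. exact: (tensor_lift_linear htA (ecoord_bilinear g)). Qed.

Lemma ecoord_term g g' u : ecoord g (iota_e u * mon xe g') = if g' == g then u else 0.
Proof.
move: u; apply: (tensor_ext htR) => [||a b].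
- exact: (klinear_comp (ecoord_linear g) (klinear_comp (klinear_mulr _) iota_e_linear)).
- by move=> c u v; case: ifP; rewrite ?scaler0 ?addr0.
rewrite /ecoord mon_xe iota_e_tensor (envelopingM hAe).
rewrite (tensor_lift_tensor htA (ecoord_bilinear g)).
have := lcoord_term (exp_l g') a (exp_l g); have := rcoord_term (exp_r g') b (exp_r g).
rewrite /lterm /rterm => -> ->; rewrite -eq_exp_lr.
by case: (_ == _); case: (_ == _); rewrite ?(kbil0l btR) ?(kbil0r btR).
Qed.

Lemma mon_xe_free (s : seq exps2) (c : exps2 -> Re) : uniq s ->
  \sum_(g <- s) iota_e (c g) * mon xe g = 0 -> forall g, g \in s -> c g = 0.
Proof.
move=> us s0 g gs; have := congr1 (ecoord g) s0.
rewrite (klinear0 (ecoord_linear g)) (klinear_sum _ _ _ (ecoord_linear g)).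
by under eq_bigr do rewrite ecoord_term; rewrite -big_mkcond big_seq_pred1.
Qed.

Lemma iota_e_inj : injective iota_e.
Proof.
move=> u v uv; apply/eqP; rewrite -subr_eq0; apply/eqP.
apply: (@mon_xe_free [:: exp0 (n + n)] (fun=> u - v)) => //; last exact: mem_head.
by rewrite big_seq1 mon_exp0 mulr1 iota_eD iota_eN uv subrr.
Qed.

Lemma xe_affine_inj l a b a' b' :
  iota_e a * xe l + iota_e b = iota_e a' * xe l + iota_e b' -> a = a' /\ b = b'.
Proof.
have E a0 b0 : iota_e a0 * xe l + iota_e b0 =
    iota_e a0 * mon xe (unit_exp l) + iota_e b0 * mon xe (exp0 (n + n)).
  by rewrite mon_unit_exp mon_exp0 mulr1.
have ne := unit_exp_neq0 l; rewrite !E => ab.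
have := congr1 (ecoord (unit_exp l)) ab; have := congr1 (ecoord (exp0 _)) ab.
rewrite /= !(klinearD (ecoord_linear _)) !ecoord_term !eqxx (negbTE ne) eq_sym (negbTE ne).
by rewrite !add0r !addr0 => -> ->.
Qed.

Lemma xe_iota_e_morph l (sigma delta : Re -> Re) :
    (forall v, xe l * iota_e v = iota_e (sigma v) * xe l + iota_e (delta v)) ->
  {morph sigma : u v / u * v} /\ sigma 1 = 1.
Proof.
move=> x_v.
by have [_ _ sM s1] := skew_derivation_props iota_e_linear iota_e1 iota_eM (@xe_affine_inj l) x_v.
Qed.

Section Relations.
Hypothesis c_unit : forall i j : 'I_n, (i < j)%N -> exists c : R,
  (exists d : R, c * d = 1 /\ d * c = 1) /\ x_affine (x j * x i - iota c * x i * x j).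

Definition xe_rel (c : Re) (i j : 'I_(n + n)) : Prop :=
  (exists d : Re, c * d = 1 /\ d * c = 1) /\ xe_affine (xe j * xe i - iota_e c * xe i * xe j).

Lemma xe_rel_ll (p q : 'I_n) : (p < q)%N -> exists c, xe_rel c (lshift n p) (lshift n q).
Proof.
move=> pq; have [c [[d [cd dc]] rel]] := c_unit pq.
exists (tR c 1); split.
  by exists (tR d 1); rewrite !(envelopingM hRe) !mulr1 cd dc (enveloping11 hRe).
rewrite !xe_lshift iota_e_tensor iota1 !(envelopingM hAe) !mulr1 -(kbilBl btA).
exact: xe_affine_tensorl.
Qed.

Lemma xe_rel_lr (p q : 'I_n) : exists c, xe_rel c (lshift n p) (rshift n q).
Proof.
exists 1; split; first by exists 1; rewrite mulr1.
rewrite xe_lshift xe_rshift iota_e1 mul1r !(envelopingM hAe) !mulr1 !mul1r subrr.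
exact: xe_affine0.
Qed.

Lemma xe_rel_rr (p q : 'I_n) : (p < q)%N -> exists c, xe_rel c (rshift n p) (rshift n q).
Proof.
move=> pq; set i := rshift n p; set j := rshift n q.
have qp : (rev_ord q < rev_ord p)%N by rewrite /= ltn_sub2l // (leq_ltn_trans pq).
have [c [[d [cd dc]] rel]] := c_unit qp.
have [sa [da [_ _ x_a]]] := xe_iota_e i; have [saM sa1] := xe_iota_e_morph x_a.
have [sb [db [_ _ x_b]]] := xe_iota_e j; have [sbM sb1] := xe_iota_e_morph x_b.
exists (sa (sb (tR 1 c))); split.
  exists (sa (sb (tR 1 d))); rewrite -!saM -!sbM !(envelopingM hRe) !mul1r.
  by rewrite cd dc (enveloping11 hRe) sb1 sa1.
have -> : xe j * xe i = xe i * xe j * iota_e (tR 1 c) +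
    tA 1 (x (rev_ord p) * x (rev_ord q) - iota c * x (rev_ord q) * x (rev_ord p)).
  rewrite !xe_rshift iota_e_tensor iota1 !(envelopingM hAe) !mul1r -(kbilDr btA).
  by rewrite mulrA addrC subrK.
rewrite -mulrA x_b mulrDr mulrA x_a !mulrDl -!mulrA.
set S := iota_e (sa _) * _; rewrite addrAC [_ + _ - S]addrAC [S + _ - S]addrAC subrr add0r.
apply: xe_affineD; last by rewrite mulrA; exact: xe_affine_tensorr rel.
by apply: xe_affineD; [exact: xe_affine_term | exact: xe_affine_xe_iota_e].
Qed.

Lemma xe_rel_lt (i j : 'I_(n + n)) : (i < j)%N -> exists c, xe_rel c i j.
Proof.
rewrite -(splitK i) -(splitK j); case: (split i) => p; case: (split j) => q /= ij.
- exact: xe_rel_ll.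
- exact: xe_rel_lr.
- by move: ij; rewrite ltnNge (leq_trans (ltnW (ltn_ord q)) (leq_addr _ _)).
- by apply: xe_rel_rr; rewrite ltn_add2l in ij.
Qed.

Lemma xe_commutation (i j : 'I_(n + n)) :
  exists c : Re, c != 0 /\ xe_affine (xe j * xe i - iota_e c * xe i * xe j).
Proof.
have unit_neq0 (c d : Re) : c * d = 1 -> c != 0.
  by move=> cd; apply: contra_eq_neq cd => ->; rewrite mul0r eq_sym oner_neq0.
have [ij|ji|/val_inj ->] := ltngtP i j.
- by have [c [[d [cd _]] rel]] := xe_rel_lt ij; exists c; split; first exact: unit_neq0 cd.
- have [c [[d [_ dc]] rel]] := xe_rel_lt ji; exists d; split; first exact: unit_neq0 dc.
  rewrite -[xe j * xe i]mul1r -iota_e1 -dc iota_eM -opprB -!mulrA -mulrBr !mulrA.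
  exact/xe_affineN/xe_affine_mull.
- exists 1; split; first exact: oner_neq0.
  by rewrite iota_e1 mul1r subrr; apply: xe_affine0.
Qed.

Lemma enveloping_bijective_skewPBW : bijective_skewPBW iota_e xe.
Proof.
split; [split|split].
- by split; [exact: iota_e_inj | exact: iota_e1 | exact: iota_eD | exact: iota_eM].
- exact: mon_xe_gen.
- exact: mon_xe_free.
- move=> l r r_neq0; have [sigma [delta [s_bij s_lin x_v]]] := xe_iota_e l.
  exists (sigma r); split; first by rewrite -(klinear0 s_lin) (bij_eq s_bij).
  by exists (delta r); rewrite x_v addrAC subrr add0r.
- exact: xe_commutation.
- by move=> l; have [sigma [delta [s_bij _ x_v]]] := xe_iota_e l; exists sigma, delta.
- by move=> i j ij; have [c [cu rel]] := xe_rel_lt ij; exists c.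
Qed.

End Relations.
End Enveloping.
End SkewPBW.

Theorem theorem4p3 (k : comRingType) (R A : algType k) (iota : R -> A)
  (n : nat) (x : 'I_n -> A)
  (iota_k : forall (c : k) (r : R), iota (c *: r) = c *: iota r)
  (hA : bijective_skewPBW iota x)
  (Re : algType k) (tR : R -> R -> Re) (hRe : is_enveloping tR)
  (Ae : algType k) (tA : A -> A -> Ae) (hAe : is_enveloping tA) :
  exists phi : Re -> Ae,
    (forall r r' : R, phi (tR r r') = tA (iota r) (iota r')) /\
    (forall (c : k) (u : Re), phi (c *: u) = c *: phi u) /\
    exists (m : nat) (y : 'I_m -> Ae), bijective_skewPBW phi y.
Proof.
case: hA => [[iota_emb mon_gen mon_free _ x_x] [x_iota c_unit]].
exists (iota_e iota tR tA); split; first exact: iota_e_tensor.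
split; first exact: klinearZ (iota_e_linear _ _ _ _).
exists (n + n), (xe x tA).
exact: (enveloping_bijective_skewPBW iota_emb iota_k mon_gen mon_free x_iota x_x hRe hAe c_unit).
Qed.
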